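(* For any integers $r\ge t\ge 2$, there exists a connected graph $G$ such that $\mathrm{gp}(G)=r$ and $\omega(G_{\rm SR})=t$.
   Context: All graphs are finite and simple. For a connected graph $G$, a set $S\subseteq V(G)$ is a general position set if no three pairwise distinct vertices of $S$ lie on a common geodesic (shortest path); $\mathrm{gp}(G)$ is the maximum cardinality of a general position set. A vertex $u$ is maximally distant from $v$ if every neighbor $w$ of $u$ satisfies $d_G(v,w)\le d_G(u,v)$; $u,v$ are mutually maximally distant (MMD) if each is maximally distant from the other. The strong resolving graph $G_{\rm SR}$ has vertex set $V(G)$, distinct vertices adjacent iff MMD in $G$. $\omega$ is the clique number. *)

From mathcomp Require Import all_boot.
Set Implicit Arguments. Unset Strict Implicit. Unset Printing Implicit Defensive.

Definition simple_graph (T : finType) (e : rel T) : Prop :=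
  symmetric e /\ irreflexive e.

Fixpoint ball (T : finType) (e : rel T) (x : T) (k : nat) : {set T} :=
  match k with
  | 0 => [set x]
  | k'.+1 => ball e x k' :|: [set y | [exists z in ball e x k', e z y]]
  end.

Definition connected_graph (T : finType) (e : rel T) : Prop :=
  forall x y : T, connect e x y.

(* Shortest-path distance: the least k with y in the k-ball of x
   (meaningful for connected graphs, where it is < #|T|). *)
Definition dist (T : finType) (e : rel T) (x y : T) : nat :=
  find (fun k => y \in ball e x k) (iota 0 #|T|).

Definition between (T : finType) (e : rel T) (a b c : T) : bool :=
  dist e a b + dist e b c == dist e a c.

Definition on_common_geodesic (T : finType) (e : rel T) (u v w : T) : bool :=
  [&& u != v, v != w, u != w &
      [|| between e v u w, between e u v w | between e u w v]].

Definition gp_set (T : finType) (e : rel T) (S : {set T}) : bool :=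
  [forall u in S, forall v in S, forall w in S, ~~ on_common_geodesic e u v w].

Definition gp (T : finType) (e : rel T) : nat :=
  \max_(S : {set T} | gp_set e S) #|S|.

Definition max_distant (T : finType) (e : rel T) (u v : T) : bool :=
  [forall w, e u w ==> (dist e v w <= dist e u v)].

Definition mmd (T : finType) (e : rel T) (u v : T) : bool :=
  max_distant e u v && max_distant e v u.

Definition sr_rel (T : finType) (e : rel T) : rel T :=
  fun u v => (u != v) && mmd e u v.

Definition is_clique (T : finType) (r : rel T) (S : {set T}) : bool :=
  [forall u in S, forall v in S, (u != v) ==> r u v].

Definition clique_number (T : finType) (r : rel T) : nat :=
  \max_(S : {set T} | is_clique r S) #|S|.

From mathcomp Require Import all_boot.
Set Implicit Arguments. Unset Strict Implicit. Unset Printing Implicit Defensive.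

(* The witness is the complete multipartite graph with r parts of size t,
   on 'I_r * 'I_t with x ~ y iff x.1 != y.1.  It has diameter 2:
   two vertices are at distance 1 iff they lie in different parts, and at
   distance 2 iff they are distinct vertices of the same part.  A vertex
   outside a part lies on a geodesic between any two vertices of that part,
   so a general position set either meets every part at most once or lies in
   a single part; both kinds are equidistant, hence gp = max r t = r.  Two
   vertices of the same part are mutually maximally distant (2 is the
   diameter), whereas for v in another part than u some neighbour of u in
   v's part is farther from v than u is; so G_SR is a disjoint union of r
   copies of K_t. *)

Lemma exists_neq (T : finType) (x : T) : 1 < #|T| -> exists y : T, y != x.
Proof.
case/card_gt1P => [a [b [_ _ ab]]].
by case: (eqVneq a x) => [ax|]; [exists b; rewrite -ax eq_sym | exists a].
Qed.

Section Balls.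
Variables (T : finType) (e : rel T).

Lemma in_ball1 (x y : T) : (y \in ball e x 1) = (y == x) || e x y.
Proof.
rewrite /= in_setU in_set1 in_set; congr orb.
apply/existsP/idP => [[z /andP[]]|exy]; first by rewrite in_set1 => /eqP ->.
by exists x; rewrite in_set1 eqxx.
Qed.

Lemma ball1_sub_ball2 (x y : T) : y \in ball e x 1 -> y \in ball e x 2.
Proof. by rewrite [ball _ _ 2]/= in_setU => ->. Qed.

Lemma mem_ball2 (x z y : T) : e x z -> e z y -> y \in ball e x 2.
Proof.
move=> exz ezy; rewrite [ball _ _ 2]/= in_setU in_set; apply/orP; right.
by apply/existsP; exists z; rewrite in_ball1 exz orbT.
Qed.

Lemma dist_in_ball2 (x y : T) : 2 < #|T| -> y \in ball e x 2 ->
  dist e x y = if y == x then 0 else if e x y then 1 else 2.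
Proof.
rewrite /dist; case: #|T| => [|[|[|n]]] // _ y2.
by rewrite /= in_set1 in_ball1 y2; case: (y == x); case: (e x y).
Qed.

End Balls.

Lemma gp_setP (T : finType) (e : rel T) (S : {set T}) :
  reflect {in S & &, forall u v w, ~~ on_common_geodesic e u v w} (gp_set e S).
Proof.
apply: (iffP forallP) => [gpS u v w uS vS wS | gpS u].
  move/implyP/(_ uS)/forallP/(_ v)/implyP/(_ vS): (gpS u).
  by move/forallP/(_ w)/implyP/(_ wS).
apply/implyP=> uS; apply/forallP=> v; apply/implyP=> vS.
by apply/forallP=> w; apply/implyP=> wS; apply: gpS.
Qed.

Lemma is_cliqueP (T : finType) (r : rel T) (S : {set T}) :
  reflect {in S &, forall u v, u != v -> r u v} (is_clique r S).
Proof.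
apply: (iffP forallP) => [clS u v uS vS | clS u].
  by move/implyP/(_ uS)/forallP/(_ v)/implyP/(_ vS)/implyP: (clS u).
apply/implyP=> uS; apply/forallP=> v; apply/implyP=> vS.
by apply/implyP; apply: clS.
Qed.

Lemma gp_set_equidistant (T : finType) (e : rel T) (S : {set T}) (d : nat) :
  0 < d -> {in S &, forall u v, u != v -> dist e u v = d} -> gp_set e S.
Proof.
move=> d_gt0 dS; apply/gp_setP => u v w uS vS wS.
apply/negP => /and4P[uv vw uw]; rewrite /between.
have dd : (d == d + d) = false.
  by rewrite -{1}[d]addn0 eqn_add2l eq_sym eqn0Ngt d_gt0.
by rewrite !dS // 1?eq_sym // dd.
Qed.

Section CompleteMultipartite.
Variables (I J : finType).

Definition multipartite_rel : rel (I * J) := fun x y => x.1 != y.1.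
Local Notation e := multipartite_rel.

Lemma multipartite_simple : simple_graph e.
Proof. by split=> [x y|x]; rewrite /e 1?eq_sym ?eqxx. Qed.

Hypotheses (I_gt1 : 1 < #|I|) (J_gt1 : 1 < #|J|).

Lemma multipartite_connected : connected_graph e.
Proof.
move=> x y; have [i ix] := exists_neq x.1 I_gt1.
have [xy|/negbNE/eqP xy] := boolP (e x y); first exact: connect1.
apply: (@connect_trans _ _ (i, x.2)); apply: connect1.
  by rewrite /e /= eq_sym.
by rewrite /e /= -xy.
Qed.

Lemma multipartite_dist (x y : I * J) :
  dist e x y = if x == y then 0 else if x.1 == y.1 then 2 else 1.
Proof.
have T_gt2 : 2 < #|{: I * J}|.
  by rewrite card_prod (leq_trans _ (leq_mul I_gt1 J_gt1)).
have [i ix] := exists_neq x.1 I_gt1.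
have y2 : y \in ball e x 2.
  have [xy|/negbNE/eqP xy] := boolP (e x y).
    by rewrite ball1_sub_ball2 // in_ball1 xy orbT.
  by apply: (@mem_ball2 _ _ _ (i, x.2)); rewrite /e /= -?xy // eq_sym.
by rewrite dist_in_ball2 // (eq_sym y) /e; case: (x == y); case: (x.1 == y.1).
Qed.

Lemma multipartite_max_distant (u v : I * J) :
  u != v -> max_distant e u v = (u.1 == v.1).
Proof.
move=> uv; rewrite /max_distant multipartite_dist (negbTE uv).
have [uv1|uv1] := eqVneq u.1 v.1.
  apply/forallP => w; apply/implyP => _.
  by rewrite multipartite_dist; case: ifP => // _; case: ifP.
have [j jv] := exists_neq v.2 J_gt1.
apply/negbTE/forallPn; exists (v.1, j); rewrite negb_imply /e uv1 /=.
rewrite multipartite_dist ifN ?eqxx //.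
by apply: contra jv => /eqP {1}->.
Qed.

Lemma multipartite_sr_rel (u v : I * J) : sr_rel e u v = (u != v) && (u.1 == v.1).
Proof.
rewrite /sr_rel /mmd; have [//|uv] := eqVneq u v.
have vu : v != u by rewrite eq_sym.
by rewrite !multipartite_max_distant // (eq_sym v.1) andbb.
Qed.

Lemma card_le_part (S : {set I * J}) (i : I) :
  {in S, forall x, x.1 = i} -> #|S| <= #|J|.
Proof.
move=> Si; apply: (@leq_card_in _ _ snd).
by move=> -[a b] [c d] /Si /= -> /Si /= -> /= ->.
Qed.

Lemma multipartite_between_parts (u v w : I * J) :
  u != v -> u.1 = v.1 -> w.1 != u.1 -> between e u w v.
Proof.
move=> uv uv1 wu; have uw : (u == w) = false by apply: contraNF wu => /eqP <-.
have wv : (w == v) = false by apply: contraNF wu => /eqP ->; rewrite uv1.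
rewrite /between !multipartite_dist uw wv (negbTE uv) -uv1 eqxx.
by rewrite (eq_sym u.1) (negbTE wu).
Qed.

Lemma gp_set_in_part (S : {set I * J}) (u v : I * J) :
  gp_set e S -> u \in S -> v \in S -> u != v -> u.1 = v.1 ->
  {in S, forall w, w.1 = u.1}.
Proof.
move=> /gp_setP gpS uS vS uv uv1 w wS; apply/eqP/negPn/negP => wu.
have uw : u != w by apply: contraNneq wu => <-.
have wv : w != v by apply: contraNneq wu => ->; rewrite uv1.
have /negP := gpS u w v uS wS vS; apply; rewrite /on_common_geodesic uv uw wv.
by rewrite (multipartite_between_parts uv) // orbT.
Qed.

Lemma gp_set_part (i : I) : gp_set e (setX [set i] [set: J]).
Proof.
apply: (@gp_set_equidistant _ _ _ 2) => // -[a b] [c d].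
rewrite !in_setX !in_set1 => /andP[/eqP-> _] /andP[/eqP-> _] ne.
by rewrite multipartite_dist (negbTE ne) eqxx.
Qed.

Lemma gp_set_transversal (j : J) : gp_set e (setX [set: I] [set j]).
Proof.
apply: (@gp_set_equidistant _ _ _ 1) => // -[a b] [c d].
rewrite !in_setX !in_set1 => /andP[_ /eqP->] /andP[_ /eqP->] ne.
have ac : a != c by apply: contraNneq ne => ->.
by rewrite multipartite_dist (negbTE ne) (negbTE ac).
Qed.

Lemma multipartite_gp : gp e = maxn #|I| #|J|.
Proof.
have [i0 _] := card_gt0P (ltnW I_gt1); have [j0 _] := card_gt0P (ltnW J_gt1).
apply/eqP; rewrite eqn_leq; apply/andP; split.
  apply/bigmax_leqP => S gpS.
  have [/dinjectiveP inj1 | /dinjectivePn[u uS [v]]] := boolP (dinjectiveb fst S).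
    by rewrite (leq_trans (leq_card_in _ _ inj1)) ?leq_maxl.
  rewrite inE => /andP[vu vS] uv1; apply: leq_trans (leq_maxr _ _).
  by apply: card_le_part (gp_set_in_part gpS uS vS _ uv1); rewrite eq_sym.
rewrite geq_max; apply/andP; split.
  apply: leq_trans (leq_bigmax_cond _ (gp_set_transversal j0)).
  by rewrite cardsX cardsT cards1 muln1.
apply: leq_trans (leq_bigmax_cond _ (gp_set_part i0)).
by rewrite cardsX cardsT cards1 mul1n.
Qed.

Lemma multipartite_clique_number : clique_number (sr_rel e) = #|J|.
Proof.
have [i0 _] := card_gt0P (ltnW I_gt1).
apply/eqP; rewrite eqn_leq; apply/andP; split.
  apply/bigmax_leqP => S /is_cliqueP clS.
  have [->|[u uS]] := set_0Vmem S; first by rewrite cards0.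
  apply: (@card_le_part _ u.1) => w wS; have [->//|uw] := eqVneq u w.
  by move: (clS u w uS wS uw); rewrite multipartite_sr_rel => /andP[_ /eqP->].
have clP : is_clique (sr_rel e) (setX [set i0] [set: J]).
  apply/is_cliqueP => -[a b] [c d].
  rewrite !in_setX !in_set1 => /andP[/eqP-> _] /andP[/eqP-> _] ne.
  by rewrite multipartite_sr_rel ne eqxx.
by rewrite (leq_trans _ (leq_bigmax_cond _ clP)) // cardsX cardsT cards1 mul1n.
Qed.

End CompleteMultipartite.

Theorem proposition3p5 (r t : nat) :
  2 <= t -> t <= r ->
  exists (T : finType) (e : rel T),
    simple_graph e /\ connected_graph e /\
    gp e = r /\ clique_number (sr_rel e) = t.
Proof.
move=> t_gt1 tr; have r_gt1 := leq_trans t_gt1 tr.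
have [I_gt1 J_gt1] : 1 < #|'I_r| /\ 1 < #|'I_t| by rewrite !card_ord.
exists ('I_r * 'I_t)%type, (@multipartite_rel 'I_r 'I_t).
split; first exact: multipartite_simple.
split; first exact: multipartite_connected.
rewrite multipartite_gp ?multipartite_clique_number // !card_ord.
by split=> //; apply/maxn_idPl.
Qed.
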